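(* Let $a,b$ be distinct elements of $\{6,7,8\}$. Suppose $G$ is a planar graph with no cycles of length $4$, $a$, $b$ or $9$, $s\ge1$, $H$ is a cover of $G$ with respect to $L(v)=\{1,\dots,s\}$ for all $v$, and $F=(f_1,\dots,f_s)$ with $f_i(v)\in\{0,1,2\}$ and $f_1(v)+\cdots+f_s(v)\ge 3$ for all $v$, such that $(G,H)$ has no DP-$F$-coloring, and suppose $|V(G)|$ is minimum among all such $(G,H,F)$ (a minimal counterexample). Then every vertex of $G$ has degree at least $3$.
   Context: A cover $H$ of $G$ w.r.t. $L$ has vertex set $\{(u,c):c\in L(u)\}$, each $\{u\}\times L(u)$ is a clique, for each edge $uv$ the edges between $\{u\}\times L(u)$ and $\{v\}\times L(v)$ form a matching, and there are no such edges for non-adjacent $u,v$. A representative set contains exactly one vertex of each $\{v\}\times L(v)$. A DP-$F$-coloring of $(G,H)$ is a representative set $R$ admitting an ordering in which each $(v,i)\in R$ has fewer than $f_i(v)$ $H$-neighbors among earlier elements of $R$. *)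

From Stdlib Require Import Reals.
From mathcomp Require Import all_boot.
Set Implicit Arguments. Unset Strict Implicit. Unset Printing Implicit Defensive.

Definition simple_graph (T : finType) (e : rel T) : Prop :=
  symmetric e /\ irreflexive e.

Definition has_cycle_of_length (T : finType) (e : rel T) (k : nat) : Prop :=
  3 <= k /\ exists s : seq T, [/\ size s = k, uniq s & cycle e s].

Definition degree (T : finType) (e : rel T) (v : T) : nat := #|[pred u | e v u]|.

Local Open Scope R_scope.

Definition in01 (t : R) : Prop := 0 <= t <= 1.
Definition open01 (t : R) : Prop := 0 < t < 1.

Definition cont01 (g : R -> R * R) : Prop :=
  forall t, in01 t -> forall eps, 0 < eps -> exists delta, 0 < delta /\
    forall t', in01 t' -> Rabs (t - t') < delta ->
      Rabs (fst (g t) - fst (g t')) < eps /\ Rabs (snd (g t) - snd (g t')) < eps.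

Definition planar (T : finType) (e : rel T) : Prop :=
  exists (pos : T -> R * R) (gamma : T -> T -> R -> R * R),
    injective pos /\
    (forall u v, e u v ->
       [/\ cont01 (gamma u v), gamma u v 0 = pos u, gamma u v 1 = pos v,
           (forall t t', in01 t -> in01 t' -> gamma u v t = gamma u v t' -> t = t')
         & (forall t w, open01 t -> gamma u v t <> pos w)]) /\
    (forall u v x y, e u v -> e x y ->
       ~ ((u = x /\ v = y) \/ (u = y /\ v = x)) ->
       forall t t', open01 t -> open01 t' -> gamma u v t <> gamma x y t').

Local Close Scope R_scope.

(* Colours 1..s are represented by 'I_s (0-based).  H is a graph on the
   vertex set {(u,c) : c in L(u)} = T * 'I_s. *)
Definition is_cover (T : finType) (e : rel T) (s : nat) (H : rel (T * 'I_s)) : Prop :=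
  [/\ simple_graph H,
      (forall u (c c' : 'I_s), c != c' -> H (u, c) (u, c')),
      (forall u v (c c1 c2 : 'I_s), e u v ->
          H (u, c) (v, c1) -> H (u, c) (v, c2) -> c1 = c2) &
      (forall u v (c c' : 'I_s), u != v -> ~~ e u v -> ~~ H (u, c) (v, c'))].

Definition valid_F (T : finType) (s : nat) (f : 'I_s -> T -> nat) : Prop :=
  forall v, (forall i, f i v <= 2) /\ 3 <= \sum_(i < s) f i v.

(* A representative set is given by phi : T -> 'I_s (R = {(v, phi v)}).
   It is a DP-F-coloring if some ordering ord of R (equivalently of V(G))
   gives each (v, phi v) fewer than f_{phi v}(v) H-neighbours among the
   earlier elements. *)
Definition dp_F_coloring (T : finType) (s : nat) (H : rel (T * 'I_s))
    (f : 'I_s -> T -> nat) : Prop :=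
  exists (phi : T -> 'I_s) (ord : seq T),
    perm_eq ord (enum T) /\
    forall p v q, ord = p ++ v :: q ->
      count (fun w => H (v, phi v) (w, phi w)) p < f (phi v) v.

Definition counterexample (a b : nat) (T : finType) (e : rel T) (s : nat)
    (H : rel (T * 'I_s)) (f : 'I_s -> T -> nat) : Prop :=
  [/\ simple_graph e /\ planar e,
      ~ has_cycle_of_length e 4 /\ ~ has_cycle_of_length e a /\
      ~ has_cycle_of_length e b /\ ~ has_cycle_of_length e 9,
      1 <= s,
      is_cover e H /\ valid_F f &
      ~ dp_F_coloring H f].

From mathcomp Require Import all_boot.

Set Implicit Arguments.
Unset Strict Implicit.
Unset Printing Implicit Defensive.

(* If a vertex v had degree at most 2, then G - v with the restricted cover and
   F would inherit every hypothesis except non-colourability (all of them pass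
   to induced subgraphs), so by minimality it has a DP-F-colouring.  That
   colouring extends by placing v last: by the matching condition each
   neighbour of v is H-adjacent to at most one vertex of {v} x L(v), so if the
   colour i of v has k_i earlier H-neighbours then
   sum_i k_i <= deg v <= 2 < 3 <= sum_i f_i(v), and k_i < f_i(v) for some i. *)

Lemma rcons_eq_cat_cons (A : Type) (l p q : seq A) (v w : A) :
  rcons l v = p ++ w :: q -> (p = l /\ w = v) \/ exists q', l = p ++ w :: q'.
Proof.
case/lastP: q => [|q z]; first by rewrite cats1 => /rcons_inj [-> ->]; left.
by rewrite -rcons_cons -rcons_cat => /rcons_inj [-> _]; right; exists q.
Qed.

Lemma map_eq_cat_cons (A B : Type) (g : A -> B) (s : seq A) p w q :
  map g s = p ++ w :: q ->
  exists p' w' q', [/\ s = p' ++ w' :: q', p = map g p' & w = g w'].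
Proof.
elim: s p => [|x s IHs] [|y p] //= [<-].
  by move=> _; exists [::], x, s.
case/IHs => p' [w' [q' [-> -> ->]]].
by exists (x :: p'), w', q'.
Qed.

Lemma sum_bool_le1 (I : finType) (Q : pred I) :
  {in Q &, forall i j, i = j} -> \sum_(i : I) Q i <= 1.
Proof.
move=> Q_uniq; have -> : \sum_(i : I) Q i = #|Q|.
  rewrite -sum1_card [RHS]big_mkcond; apply: eq_bigr => i _.
  by rewrite unfold_in; case: (Q i).
by apply/card_le1_eqP => i j Qi Qj; exact: Q_uniq.
Qed.

Section CoverCounting.

Variables (T : finType) (e : rel T) (s : nat) (H : rel (T * 'I_s)).
Hypotheses (e_sym : symmetric e) (H_cover : is_cover e H).

Lemma sum_cover_fibre_adj_le (v u : T) (d : 'I_s) :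
  u != v -> \sum_(c < s) H (v, c) (u, d) <= e v u.
Proof.
case: H_cover => -[H_sym _] _ H_match H_nonadj uv.
case: (boolP (e v u)) => [evu | nevu]; last first.
  rewrite big1 // => c _.
  by rewrite (negbTE (H_nonadj _ _ _ _ _ nevu)) // eq_sym.
apply: sum_bool_le1 => c1 c2; rewrite !unfold_in /= => Hc1 Hc2.
by apply: (H_match u v d); rewrite 1?e_sym // H_sym.
Qed.

Lemma count_adj_le_degree (v : T) (l : seq T) :
  uniq l -> count (e v) l <= degree e v.
Proof.
move=> l_uniq; rewrite -size_filter /degree cardE.
apply: uniq_leq_size; first exact: filter_uniq.
by move=> u; rewrite mem_filter mem_enum => /andP[].
Qed.

Lemma sum_count_cover_le_degree (v : T) (l : seq (T * 'I_s)) :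
  uniq (map fst l) -> v \notin map fst l ->
  \sum_(c < s) count (H (v, c)) l <= degree e v.
Proof.
move=> l_uniq v_notin; apply: leq_trans _ (count_adj_le_degree v l_uniq).
elim: l v_notin {l_uniq} => [|[u d] l IHl] /=; first by rewrite big1.
rewrite inE negb_or eq_sym => /andP[uv /IHl {}IHl].
by rewrite big_split /= leq_add // sum_cover_fibre_adj_le.
Qed.

Lemma exists_free_colour (f : 'I_s -> T -> nat) (v : T) (l : seq (T * 'I_s)) :
  uniq (map fst l) -> v \notin map fst l -> degree e v < \sum_(i < s) f i v ->
  exists c : 'I_s, count (H (v, c)) l < f c v.
Proof.
move=> l_uniq v_notin deg_lt.
pose free c := count (H (v, c)) l < f c v.
have [c c_free | all_blocked] := pickP free; first by exists c.
suff : \sum_(i < s) f i v <= degree e v by rewrite leqNgt deg_lt.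
apply: leq_trans _ (sum_count_cover_le_degree l_uniq v_notin).
by apply: leq_sum => c _; rewrite leqNgt -/(free c) all_blocked.
Qed.

End CoverCounting.

Section InducedSubgraph.

Variables (T : finType) (P : pred T).

Definition induced (e : rel T) : rel {x | P x} := fun x y => e (val x) (val y).

Definition induced_cover s (H : rel (T * 'I_s)) : rel ({x | P x} * 'I_s) :=
  fun x y => H (val x.1, x.2) (val y.1, y.2).

Definition restrict_F s (f : 'I_s -> T -> nat) : 'I_s -> {x | P x} -> nat :=
  fun i x => f i (val x).

Lemma simple_graph_induced (e : rel T) :
  simple_graph e -> simple_graph (induced e).
Proof. by case=> e_sym e_irr; split=> [x y | x]; [exact: e_sym | exact: e_irr]. Qed.

Lemma planar_induced (e : rel T) : planar e -> planar (induced e).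
Proof.
case=> pos [gamma [pos_inj [arc_ok arcs_disj]]].
exists (fun x => pos (val x)), (fun x y => gamma (val x) (val y)); split.
  by move=> x y /pos_inj /val_inj.
split.
  move=> x y /arc_ok [? ? ? ? avoid]; split=> // t w; exact: avoid.
move=> x y x' y' exy ex'y' not_same; apply: arcs_disj exy ex'y' _.
by case=> -[/val_inj eq1 /val_inj eq2]; apply: not_same; subst; auto.
Qed.

Lemma has_cycle_of_length_induced (e : rel T) k :
  has_cycle_of_length (induced e) k -> has_cycle_of_length e k.
Proof.
case=> k_ge3 [c [c_size c_uniq c_cycle]]; split=> //.
exists (map val c); split; first by rewrite size_map.
  by rewrite map_inj_uniq //; exact: val_inj.
by rewrite cycle_map.
Qed.

Lemma is_cover_induced (e : rel T) s (H : rel (T * 'I_s)) :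
  is_cover e H -> is_cover (induced e) (induced_cover H).
Proof.
case=> -[H_sym H_irr] H_clique H_match H_nonadj; split.
- by split=> [x y | x]; [exact: H_sym | exact: H_irr].
- by move=> u c c'; exact: H_clique.
- by move=> u w c c1 c2; exact: H_match.
- by move=> u w c c'; exact: H_nonadj.
Qed.

Lemma valid_F_restrict s (f : 'I_s -> T -> nat) :
  valid_F f -> valid_F (restrict_F f).
Proof. by move=> f_valid x; exact: f_valid. Qed.

End InducedSubgraph.

Arguments induced {T} P e.
Arguments induced_cover {T} P {s} H.
Arguments restrict_F {T} P {s} f.

Section VertexDeletion.

Variables (T : finType) (e : rel T) (s : nat) (H : rel (T * 'I_s)).
Variables (f : 'I_s -> T -> nat) (v : T).

Lemma card_delete_vertex : #|{: {x | x != v}}| = #|T|.-1.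
Proof. by rewrite card_sig -(cardC1 v); apply: eq_card. Qed.

Lemma dp_F_coloring_extend :
  symmetric e -> is_cover e H -> degree e v < \sum_(i < s) f i v ->
  dp_F_coloring (induced_cover (predC1 v) H) (restrict_F (predC1 v) f) ->
  dp_F_coloring H f.
Proof.
move=> e_sym H_cover deg_lt [phi' [ord' [ord'_perm ord'_ok]]].
pose placed := [seq (val y, phi' y) | y <- ord'].
have placed_fst : map fst placed = map val ord' by rewrite -map_comp.
have ord_uniq : uniq (map val ord').
  by rewrite map_inj_uniq ?(perm_uniq ord'_perm) ?enum_uniq //; exact: val_inj.
have v_notin : v \notin map val ord'.
  by apply/mapP => -[y _ yv]; move: (valP y); rewrite /= -yv eqxx.
have [c c_free] : exists c : 'I_s, count (H (v, c)) placed < f c v.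
  by apply: exists_free_colour; rewrite ?placed_fst.
pose phi x : 'I_s := oapp phi' c (insub x).
have phi_val y : phi (val y) = phi' y by rewrite /phi valK.
have phi_v : phi v = c by rewrite /phi insubF //= eqxx.
exists phi, (rcons (map val ord') v); split.
  apply: uniq_perm; rewrite ?rcons_uniq ?v_notin ?enum_uniq // => x.
  rewrite mem_rcons inE mem_enum; case: (eqVneq x v) => //= xv.
  by apply/mapP; exists (Sub x xv) => //; rewrite (perm_mem ord'_perm) mem_enum.
move=> p w q /(@rcons_eq_cat_cons T) [[-> ->] | [q' ord_split]].
  rewrite phi_v count_map; under eq_count do rewrite /= phi_val.
  by rewrite count_map in c_free.
have [p' [w' [q'' [ord'_eq -> ->]]]] := map_eq_cat_cons ord_split.
rewrite phi_val count_map; under eq_count do rewrite /= phi_val.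
exact: ord'_ok ord'_eq.
Qed.

Lemma counterexample_delete_vertex a b :
  counterexample a b e H f -> degree e v < \sum_(i < s) f i v ->
  counterexample a b (induced (predC1 v) e)
    (induced_cover (predC1 v) H) (restrict_F (predC1 v) f).
Proof.
case=> -[e_simple e_planar] [no4 [noa [nob no9]]] s_pos [H_cover f_valid].
move=> not_colourable deg_lt.
split=> //.
- by split; [exact: simple_graph_induced | exact: planar_induced].
- by do 3?split; move/has_cycle_of_length_induced.
- by split; [exact: is_cover_induced | exact: valid_F_restrict].
- by move/(dp_F_coloring_extend e_simple.1 H_cover deg_lt).
Qed.

End VertexDeletion.

Theorem lemma3 (a b : nat) (T : finType) (e : rel T) (s : nat)
    (H : rel (T * 'I_s)) (f : 'I_s -> T -> nat) :
  a \in [:: 6; 7; 8] -> b \in [:: 6; 7; 8] -> a != b ->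
  counterexample a b e H f ->
  (forall (T' : finType) (e' : rel T') (s' : nat) (H' : rel (T' * 'I_s'))
          (f' : 'I_s' -> T' -> nat),
      counterexample a b e' H' f' -> #|T| <= #|T'|) ->
  forall v : T, 3 <= degree e v.
Proof.
move=> _ _ _ cex minimal v; rewrite leqNgt; apply/negP => deg_le2.
have deg_lt : degree e v < \sum_(i < s) f i v.
  by case: cex => _ _ _ [_ f_valid] _; apply: leq_trans deg_le2 (f_valid v).2.
have := minimal _ _ _ _ _ (counterexample_delete_vertex cex deg_lt).
rewrite card_delete_vertex -ltnS prednK ?ltnn //.
by apply/card_gt0P; exists v.
Qed.
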